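(* Let $\lambda$ be a partition with $n$ parts, let $\beta \in UBP_\lambda(n)$, and set $\delta := \Delta_\lambda(\beta)$. Let $\pi$ be a permutation of $[n]$ and let $\Lambda = (\Lambda_1,\dots,\Lambda_n) \in \mathcal{LD}_\lambda(\beta;\pi)$. Then for each $m \in [n]$ the component $\Lambda_m$ passes through the point $(\lambda_{\pi_m} + n - \pi_m, \delta_{\pi_m})$ and from there proceeds only by southerly steps to its endpoint $(\lambda_{\pi_m} + n - \pi_m, \beta_{\pi_m})$.
   Context: Fix an integer $n \geq 1$ and write $[k] = \{1,\dots,k\}$. A partition is $\lambda = (\lambda_1,\dots,\lambda_n)$ with $\lambda_1 \geq \dots \geq \lambda_n \geq 0$ integers. Let $R_\lambda \subseteq [n-1]$ be the set of $q \in [n-1]$ with $\lambda_q > \lambda_{q+1}$; write its elements $q_1 < \dots < q_r$, and set $q_0 := 0$, $q_{r+1} := n$. For $h \in [r+1]$ the $h$-th carrel is the index interval $\{q_{h-1}+1,\dots,q_h\}$. A $\lambda$-tuple is an $n$-tuple $\beta$ with entries in $[n]$, considered with this carrel structure; it is upper if $\beta_i \geq i$ for all $i$. $U_\lambda(n)$ is the set of upper $\lambda$-tuples. Critical indices: for $\beta \in U_\lambda(n)$ and $h \in [r+1]$, set $x_1 := q_h$; given $x_{u-1}$, if some index $x$ with $q_{h-1} < x < x_{u-1}$ satisfies $\beta_{x_{u-1}} - \beta_x > x_{u-1} - x$, let $x_u$ be the largest such $x$, otherwise stop. The $x_u$ are the critical indices of $\beta$ in carrel $h$. For $i \in [n]$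 let $x(i)$ be the smallest critical index in the carrel of $i$ with $x(i) \geq i$. The $\lambda$-core is $\Delta_\lambda(\beta) := \delta$ with $\delta_i := \beta_{x(i)} - (x(i)-i)$, and the $\lambda$-platform is $\Xi_\lambda(\beta) := \xi$ with $\xi_i := \beta_{x(i)}$. $UBP_\lambda(n)$ is the set of $\beta \in U_\lambda(n)$ with $\beta_i \leq \Xi_\lambda(\beta)_i$ for all $i$. Lattice paths: lattice points are integer pairs $(a,b)$ with $a \geq 0$, $b \geq 1$. A lattice path is a sequence of lattice points each consecutive step of which is an easterly step $(a,b) \to (a+1,b)$ or a southerly step $(a,b) \to (a,b+1)$. An $n$-path is $(\Lambda_1,\dots,\Lambda_n)$ with $\Lambda_m$ a lattice path starting at $(n-m,m)$. The terminals of $(\lambda,\beta)$ are $P_m := (\lambda_m + n - m, \beta_m)$, $m \in [n]$. For a permutation $\pi$ of $[n]$, $\mathcal{LD}_\lambda(\beta;\pi)$ is the set of $n$-paths with $\Lambda_m$ ending at $P_{\pi_m}$ for every $m$ and no two distinct components sharing a lattice point. *)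

(* Indices are natural numbers, 1-based: [k] = {1,..,k}.
   Tuples (lambda, beta, pi, ...) are functions nat -> nat, only their values
   on [n] matter. *)
From mathcomp Require Import all_boot.
Set Implicit Arguments. Unset Strict Implicit. Unset Printing Implicit Defensive.

Definition in_range (n i : nat) : bool := (1 <= i) && (i <= n).

Definition is_partition (n : nat) (lam : nat -> nat) : Prop :=
  forall i, 1 <= i -> i < n -> lam i.+1 <= lam i.

Definition inR (n : nat) (lam : nat -> nat) (q : nat) : bool :=
  [&& 1 <= q, q <= n - 1 & lam q.+1 < lam q].

(* carrel of i is {lo i + 1, ..., hi i} *)
Definition carrel_lo (n : nat) (lam : nat -> nat) (i : nat) : nat :=
  foldr maxn 0 [seq q <- iota 0 i | inR n lam q].
Definition carrel_hi (n : nat) (lam : nat -> nat) (i : nat) : nat :=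
  head n [seq q <- iota i (n - i) | inR n lam q].

(* one step of the critical-index recursion: largest x with lo < x < y and
   beta_y - beta_x > y - x  (written in nat as beta_y + x > y + beta_x) *)
Definition next_crit (beta : nat -> nat) (lo y : nat) : option nat :=
  let s := [seq x <- iota lo.+1 (y - lo.+1) | y + beta x < beta y + x] in
  if s is [::] then None else Some (last 0 s).

Fixpoint crit_from (beta : nat -> nat) (lo y fuel : nat) : seq nat :=
  match fuel with
  | 0 => [:: y]
  | f.+1 => y :: (match next_crit beta lo y with
                  | Some x => crit_from beta lo x f
                  | None => [::] end)
  end.

(* critical indices of beta in the carrel (lo, hi]; fuel hi suffices since the
   sequence is strictly decreasing and stays above lo >= 0 *)
Definition crit_indices (beta : nat -> nat) (lo hi : nat) : seq nat :=
  crit_from beta lo hi hi.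

Definition xcrit (n : nat) (lam beta : nat -> nat) (i : nat) : nat :=
  let lo := carrel_lo n lam i in
  let hi := carrel_hi n lam i in
  foldr minn hi [seq x <- crit_indices beta lo hi | i <= x].

Definition core (n : nat) (lam beta : nat -> nat) (i : nat) : nat :=
  beta (xcrit n lam beta i) - (xcrit n lam beta i - i).

Definition platform (n : nat) (lam beta : nat -> nat) (i : nat) : nat :=
  beta (xcrit n lam beta i).

Definition is_tuple (n : nat) (beta : nat -> nat) : Prop :=
  forall i, in_range n i -> in_range n (beta i).

Definition upper (n : nat) (beta : nat -> nat) : Prop :=
  is_tuple n beta /\ forall i, in_range n i -> i <= beta i.

Definition UBP (n : nat) (lam beta : nat -> nat) : Prop :=
  upper n beta /\ forall i, in_range n i -> beta i <= platform n lam beta i.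

Definition is_perm (n : nat) (pi : nat -> nat) : Prop :=
  (forall m, in_range n m -> in_range n (pi m)) /\
  (forall m m', in_range n m -> in_range n m' -> pi m = pi m' -> m = m').

(* lattice points (a,b) with a >= 0, b >= 1; paths as nonempty point lists *)
Definition lattice_step (p q : nat * nat) : bool :=
  (q == (p.1.+1, p.2)) || (q == (p.1, p.2.+1)).

Definition lattice_path (P : seq (nat * nat)) : Prop :=
  P != [::] /\ all (fun p => 1 <= p.2) P /\
  forall j, j.+1 < size P -> lattice_step (nth (0,0) P j) (nth (0,0) P j.+1).

Definition terminal (n : nat) (lam beta : nat -> nat) (m : nat) : nat * nat :=
  (lam m + n - m, beta m).

Definition LD (n : nat) (lam beta pi : nat -> nat)
    (L : nat -> seq (nat * nat)) : Prop :=
  (forall m, in_range n m ->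
     lattice_path (L m) /\
     head (0,0) (L m) = (n - m, m) /\
     last (0,0) (L m) = terminal n lam beta (pi m)) /\
  (forall m m' p, in_range n m -> in_range n m' -> m <> m' ->
     p \in L m -> p \notin L m').

From mathcomp Require Import all_boot zify.
Set Implicit Arguments. Unset Strict Implicit. Unset Printing Implicit Defensive.

(* Let i = pi_m, X = x(i) and c = lambda_i + n. The block [i, X] lies in one
   carrel, so lambda is constant on it; every j in it has x(j) = X, so beta_j is
   at most the platform beta_X; and since X is critical, beta_X - beta_j <= X - j.
   Hence the component ending at P_j, j in [i, X], ends at (c - j, beta_j) on or
   beyond the antidiagonal a + b = K := c - X + beta_X, and meets it at a point
   of abscissa in [c - X, c - j]. Disjointness makes these abscissas distinct,
   so by downward induction from j = X the component ending at P_j meets the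
   antidiagonal exactly at (c - j, delta_j). Having reached its final abscissa
   there, it can only go south. *)

Lemma is_perm_onto n pi j : is_perm n pi -> in_range n j ->
  exists2 m, in_range n m & pi m = j.
Proof.
move=> [pi_in pi_inj] j_in.
have range_iota k : in_range n k = (k \in iota 1 n) by rewrite mem_iota /in_range; lia.
have pi_uniq : uniq (map pi (iota 1 n)).
  by rewrite map_inj_in_uniq ?iota_uniq // => a b; rewrite -!range_iota; apply: pi_inj.
have pi_sub : {subset map pi (iota 1 n) <= iota 1 n}.
  by move=> k /mapP[a]; rewrite -!range_iota => /pi_in ? ->.
have [_ img] := uniq_min_size pi_uniq pi_sub (eq_leq (esym (size_map pi _))).
by move: j_in; rewrite range_iota -img => /mapP[m]; rewrite -range_iota; exists m.
Qed.

Section FoldrMinn.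

Variable d : nat.

Lemma foldr_minn_le_default r : foldr minn d r <= d.
Proof. by elim: r => //= z r IH; rewrite geq_min IH orbT. Qed.

Lemma foldr_minn_le r z : z \in r -> foldr minn d r <= z.
Proof.
elim: r => //= x r IH; rewrite inE geq_min => /orP[/eqP->|/IH->];
by rewrite ?leqnn ?orbT.
Qed.

Lemma foldr_minn_mem r : foldr minn d r \in d :: r.
Proof.
elim: r => [|z r IH] /=; first exact: mem_head.
rewrite /minn; case: ifP => _; first by rewrite !inE eqxx orbT.
by move: IH; rewrite !inE => /orP[] ->; rewrite ?orbT.
Qed.

Lemma min_above_bounds s i : i <= d ->
  i <= foldr minn d [seq z <- s | i <= z] <= d.
Proof.
move=> le_id; rewrite foldr_minn_le_default andbT.
move: (foldr_minn_mem [seq z <- s | i <= z]).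
by rewrite inE mem_filter => /orP[/eqP->|/andP[]].
Qed.

Lemma min_above_const s i j : i <= j <= foldr minn d [seq z <- s | i <= z] ->
  foldr minn d [seq z <- s | j <= z] = foldr minn d [seq z <- s | i <= z].
Proof.
move=> /andP[le_ij le_j]; congr foldr; apply: eq_in_filter => z zs.
apply/idP/idP => [/(leq_trans le_ij)//|le_iz].
by apply: leq_trans le_j (foldr_minn_le _); rewrite mem_filter le_iz.
Qed.

End FoldrMinn.

Section Carrel.

Variables (n : nat) (lam : nat -> nat).

Lemma carrel_hiE i : i <= n ->
  carrel_hi n lam i = i + find (inR n lam) (iota i (n - i)).
Proof.
have head_filter r : head n (filter (inR n lam) r) = nth n r (find (inR n lam) r).
  by elim: r => //= z r IH; case: ifP.
move=> le_in; rewrite /carrel_hi head_filter.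
have := find_size (inR n lam) (iota i (n - i)); rewrite size_iota leq_eqVlt.
by case/orP => [/eqP ->|/nth_iota -> //]; rewrite nth_default ?size_iota //; lia.
Qed.

Lemma carrel_hi_spec i : i <= n ->
  i <= carrel_hi n lam i <= n /\
  (forall q, i <= q < carrel_hi n lam i -> ~~ inR n lam q).
Proof.
move=> le_in; rewrite carrel_hiE //.
have := find_size (inR n lam) (iota i (n - i)); rewrite size_iota => le_find.
split => [|q /andP[le_iq lt_q]]; first lia.
have := @before_find _ n (inR n lam) (iota i (n - i)) (q - i).
by rewrite nth_iota; [rewrite subnKC // => ->|]; lia.
Qed.

Lemma carrel_lo_lt i : 0 < i -> carrel_lo n lam i < i.
Proof.
move=> i_gt0; rewrite /carrel_lo.
have: all (fun q => q < i) [seq q <- iota 0 i | inR n lam q].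
  by apply/allP => q; rewrite mem_filter mem_iota => /andP[_ /andP[]].
by elim: [seq q <- _ | _] => //= q r IH /andP[lt_qi /IH]; rewrite gtn_max lt_qi.
Qed.

Lemma carrel_eq i j : i <= n -> i <= j <= carrel_hi n lam i ->
  carrel_lo n lam j = carrel_lo n lam i /\ carrel_hi n lam j = carrel_hi n lam i.
Proof.
move=> le_in /andP[le_ij le_jh]; have [/andP[_ le_hn] notR] := carrel_hi_spec le_in.
have gap : [seq q <- iota i (j - i) | inR n lam q] = [::].
  rewrite -(filter_pred0 (iota i (j - i))); apply: eq_in_filter => q.
  by rewrite mem_iota => range_q; apply/negbTE/notR; lia.
split; first by rewrite /carrel_lo -(subnKC le_ij) iotaD filter_cat gap cats0.
rewrite /carrel_hi (_ : n - i = (j - i) + (n - j)); last lia.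
by rewrite iotaD filter_cat gap subnKC.
Qed.

Lemma partition_carrel_const i j : is_partition n lam -> 0 < i -> i <= n ->
  i <= j <= carrel_hi n lam i -> lam j = lam i.
Proof.
move=> lam_part i_gt0 le_in; have [/andP[_ le_hn] notR] := carrel_hi_spec le_in.
elim: j => [|j IH] /andP[le_ij le_jh]; first lia.
have [-> //|ne_ij] := eqVneq i j.+1.
have lam_j : lam j = lam i by apply: IH; lia.
have lam_step : lam j.+1 <= lam j by apply: lam_part; lia.
have not_R : ~~ inR n lam j by apply: notR; lia.
by move: not_R; rewrite /inR; lia.
Qed.

End Carrel.

Lemma sorted_leq_last d s x : sorted leq s -> x \in s -> x <= last d s.
Proof.
elim: s d => //= y s IH d; rewrite (path_sortedE leq_trans) inE.
case/andP=> /allP le_y sorted_s /predU1P[->|/(IH y sorted_s) //].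
by case/predU1P: (mem_last y s) => [->|/le_y].
Qed.

Section CriticalIndices.

Variables (beta : nat -> nat) (lo : nat).

Lemma next_crit_lt y x : next_crit beta lo y = Some x -> lo < x < y.
Proof.
rewrite /next_crit; set s := filter _ _.
have: last 0 s \in s -> lo < last 0 s < y.
  by rewrite mem_filter mem_iota => /andP[_]; lia.
by case: s => //= z r last_in [<-]; apply: last_in; apply: mem_last.
Qed.

Lemma next_crit_ge y j : lo < j < y -> y + beta j < beta y + j ->
  exists2 x, next_crit beta lo y = Some x & j <= x.
Proof.
move=> range_j viol; rewrite /next_crit; set s := filter _ _.
have j_in : j \in s by rewrite mem_filter viol mem_iota; lia.
have le_j := sorted_leq_last 0 (sorted_filter leq_trans _ (iota_sorted _ _)) j_in.
rewrite -/s in le_j; clearbody s.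
by case: s j_in le_j => // z r _ le_j; exists (last 0 (z :: r)).
Qed.

Lemma crit_from_head y f : y \in crit_from beta lo y f.
Proof. by case: f => [|f] /=; rewrite mem_head. Qed.

Lemma crit_from_next y f z x : lo < y <= lo + f.+1 ->
  z \in crit_from beta lo y f -> next_crit beta lo z = Some x ->
  x \in crit_from beta lo y f.
Proof.
elim: f y => [|f IH] y /andP[lt_lo_y le_y] /=.
  by rewrite inE => /eqP -> /next_crit_lt; lia.
case next_y: (next_crit beta lo y) => [x'|]; last first.
  by rewrite inE => /eqP -> next_z; move: next_y; rewrite next_z.
rewrite inE => /predU1P[-> next_z|z_in next_z].
  by move: next_y; rewrite next_z => -[->]; rewrite inE crit_from_head orbT.
have := next_crit_lt next_y => range_x'.
by rewrite inE (IH x') ?orbT //; lia.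
Qed.

End CriticalIndices.

Section CriticalIndexOfCarrel.

Variables (n : nat) (lam beta : nat -> nat) (i : nat).
Hypothesis i_in : in_range n i.

Local Notation lo := (carrel_lo n lam i).
Local Notation hi := (carrel_hi n lam i).
Local Notation X := (xcrit n lam beta i).

Let i_gt0 : 0 < i. Proof. by case/andP: i_in. Qed.
Let le_in : i <= n. Proof. by case/andP: i_in. Qed.

Lemma xcrit_bounds : i <= X <= hi.
Proof. by apply: min_above_bounds; case: (@carrel_hi_spec n lam i le_in) => /andP[]. Qed.

Lemma xcrit_const j : i <= j <= X -> xcrit n lam beta j = X.
Proof.
move=> range_j; have /andP[_ le_Xh] := xcrit_bounds.
have range_j' : i <= j <= hi by lia.
have [eq_lo eq_hi] := @carrel_eq n lam i j le_in range_j'.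
by rewrite {1}/xcrit /= eq_lo eq_hi; apply: min_above_const.
Qed.

Lemma xcrit_slope j : i <= j <= X -> beta X + j <= X + beta j.
Proof.
move=> /andP[le_ij]; rewrite leq_eqVlt => /predU1P[->|lt_jX]; first by rewrite addnC.
have /andP[le_iX le_Xh] := xcrit_bounds; have lt_lo_i := @carrel_lo_lt n lam i i_gt0.
rewrite leqNgt; apply/negP => viol.
have X_crit : X \in crit_indices beta lo hi.
  move: (foldr_minn_mem hi [seq x <- crit_indices beta lo hi | i <= x]).
  by rewrite /xcrit /= inE mem_filter => /orP[/eqP ->|/andP[]//]; apply: crit_from_head.
have range_j : lo < j < X by lia.
have [x next_X le_jx] := next_crit_ge range_j viol.
have range_hi : lo < hi <= lo + hi.+1 by lia.
have x_crit := crit_from_next range_hi X_crit next_X.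
have x_above : x \in [seq x <- crit_indices beta lo hi | i <= x].
  by rewrite mem_filter x_crit (leq_trans le_ij le_jx).
have := foldr_minn_le hi x_above.
by have := next_crit_lt next_X; rewrite /xcrit /=; lia.
Qed.

End CriticalIndexOfCarrel.

Definition level (p : nat * nat) : nat := p.1 + p.2.

Section LatticePath.

Variable P : seq (nat * nat).
Hypothesis P_path : lattice_path P.

Lemma lattice_path_level k :
  k < size P -> level (nth (0,0) P k) = level (head (0,0) P) + k.
Proof.
case: P_path => _ [_ step]; elim: k => [|k IH] ltk; first by rewrite nth0 addn0.
have := IH (ltnW ltk); rewrite /level.
by case/orP: (step k ltk) => /eqP -> /=; lia.
Qed.

Lemma lattice_path_le k k' : k <= k' -> k' < size P ->
  (nth (0,0) P k).1 <= (nth (0,0) P k').1 /\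
  (nth (0,0) P k).2 <= (nth (0,0) P k').2.
Proof.
case: P_path => _ [_ step] lekk' ltk'.
pose le2 (p q : nat * nat) := p.1 <= q.1 /\ p.2 <= q.2.
have mono := @homo_leq_in _ [pred j | j < size P] (nth (0,0) P) le2.
apply: mono => //=; last exact: leq_ltn_trans ltk'.
- by move=> q p r; rewrite /le2; lia.
- by move=> j j' _ /= ltj' j'' /andP[_ /ltn_trans]; apply.
- by move=> j _ /= /step /orP[] /eqP ->; rewrite /le2 /=.
Qed.

Lemma lattice_path_cross K :
  level (head (0,0) P) <= K <= level (last (0,0) P) ->
  K - level (head (0,0) P) < size P.
Proof.
have lt_last : (size P).-1 < size P by rewrite ltn_predL; case: P_path; case: (P).
by have := lattice_path_level lt_last; rewrite nth_last; lia.
Qed.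

Lemma lattice_path_south_tail k :
  k < size P -> (nth (0,0) P k).1 = (last (0,0) P).1 ->
  forall j, k <= j -> j.+1 < size P ->
    nth (0,0) P j.+1 = ((nth (0,0) P j).1, (nth (0,0) P j).2.+1).
Proof.
case: (P_path) => _ [_ step] ltk eq_x j lekj ltj.
have [le_kj _] := lattice_path_le lekj (ltnW ltj).
have lt_last : (size P).-1 < size P by lia.
have le_j1 : j.+1 <= (size P).-1 by lia.
have [le_last _] := lattice_path_le le_j1 lt_last.
rewrite nth_last in le_last.
by case/orP: (step j ltj) => /eqP E //; rewrite E /= in le_last; lia.
Qed.

End LatticePath.

Lemma dominating_inj_eq (T : Type) (D : T -> Prop) (t h : T -> nat) (X : nat) :
  (forall a, D a -> t a <= h a <= X) ->
  (forall a j, D a -> t a <= j <= X -> exists2 b, D b & t b = j) ->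
  (forall a b, D a -> D b -> h a = h b -> t a = t b) ->
  forall a, D a -> h a = t a.
Proof.
move=> bounds onto inj a; have [k] := ubnP (X - t a).
elim: k a => // k IH a ltk Da; have /andP[le_th le_hX] := bounds a Da.
apply/eqP; rewrite eqn_leq le_th andbT leqNgt; apply/negP => lt_th.
have [b Db tb] := onto a (h a) Da (introT andP (conj le_th le_hX)).
have hb : h b = t b by apply: IH Db; lia.
by have := inj a b Da Db (esym (etrans hb tb)); lia.
Qed.

Section DisjointPathsVerticalTail.

Variables (T : eqType) (D : T -> Prop) (t y : T -> nat).
Variables (P : T -> seq (nat * nat)) (c B X : nat).
Hypothesis X_le_c : X <= c.
Hypothesis t_le_X : forall a, D a -> t a <= X.
Hypothesis y_le_B : forall a, D a -> y a <= B.
Hypothesis B_le_y : forall a, D a -> B + t a <= X + y a.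
Hypothesis t_onto : forall a j, D a -> t a <= j <= X -> exists2 b, D b & t b = j.
Hypothesis P_path : forall a, D a -> lattice_path (P a).
Hypothesis P_head : forall a, D a -> level (head (0,0) (P a)) <= c - X + B.
Hypothesis P_last : forall a, D a -> last (0,0) (P a) = (c - t a, y a).
Hypothesis P_disjoint :
  forall a b p, D a -> D b -> a <> b -> p \in P a -> p \notin P b.

Let K := c - X + B.
Let k a := K - level (head (0,0) (P a)).
Let cross a := nth (0,0) (P a) (k a).

Lemma cross_spec a : D a ->
  [/\ k a < size (P a), level (cross a) = K,
      (cross a).1 <= c - t a & (cross a).2 <= y a].
Proof.
move=> Da; have Pa := P_path Da; have head_le := P_head Da.
have := t_le_X Da; have := B_le_y Da => le_By le_tX.
have lt_k : k a < size (P a).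
  rewrite /k; apply: lattice_path_cross => //.
  by rewrite head_le P_last // /level /K /=; lia.
have lt_last : (size (P a)).-1 < size (P a) by lia.
have le_k : k a <= (size (P a)).-1 by lia.
have [le1 le2] := lattice_path_le Pa le_k lt_last.
rewrite nth_last P_last //= in le1 le2.
by split => //; rewrite /cross (lattice_path_level Pa) // /k; lia.
Qed.

Lemma cross_x_inj a b : D a -> D b -> (cross a).1 = (cross b).1 -> t a = t b.
Proof.
move=> Da Db eq_x; have [/(mem_nth (0,0)) in_a lev_a _ _] := cross_spec Da.
have [/(mem_nth (0,0)) in_b lev_b _ _] := cross_spec Db.
have eq_ab : cross a = cross b.
  move: (cross a) (cross b) eq_x lev_a lev_b => [xa ya] [xb yb].
  by rewrite /level /= => -> ? ?; congr pair; lia.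
case: (eqVneq a b) => [-> //|/eqP neq].
by have := P_disjoint Da Db neq in_a; rewrite -/(cross a) eq_ab in_b.
Qed.

Lemma cross_x a : D a -> (cross a).1 = c - t a.
Proof.
move=> Da; suff: c - (cross a).1 = t a.
  by have [_ _ le_x _] := cross_spec Da; have := t_le_X Da; lia.
apply: (@dominating_inj_eq T D t (fun a => c - (cross a).1) X) => // [a' Da'|a' b Da' Db'].
  have [_ lev le_x le_y] := cross_spec Da'; have := y_le_B Da'; have := t_le_X Da'.
  by rewrite /level /K in lev; lia.
have [_ _ le_xa _] := cross_spec Da'; have [_ _ le_xb _] := cross_spec Db'.
by move=> eq_c; apply: cross_x_inj => //; lia.
Qed.

Lemma disjoint_paths_vertical_tail a : D a ->
  exists2 k, k < size (P a) &
    nth (0,0) (P a) k = (c - t a, B + t a - X) /\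
    (forall j, k <= j -> j.+1 < size (P a) ->
       nth (0,0) (P a) j.+1
         = ((nth (0,0) (P a) j).1, (nth (0,0) (P a) j).2.+1)).
Proof.
move=> Da; have [lt_k lev _ _] := cross_spec Da; have x_eq := cross_x Da.
exists (k a) => //; split.
  rewrite -/(cross a) [cross a]surjective_pairing x_eq; congr pair.
  by move: lev; rewrite /level /K x_eq; have := t_le_X Da; lia.
by apply: (lattice_path_south_tail (P_path Da) lt_k); rewrite P_last.
Qed.

End DisjointPathsVerticalTail.

Lemma xcrit_block n lam beta i j :
  is_partition n lam -> UBP n lam beta -> in_range n i ->
  i <= j <= xcrit n lam beta i ->
  [/\ in_range n j, lam j = lam i, j <= beta j,
      beta j <= beta (xcrit n lam beta i)
    & beta (xcrit n lam beta i) + j <= xcrit n lam beta i + beta j].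
Proof.
move=> lam_part [[_ beta_up] beta_plat] i_in range_j.
have /andP[i_gt0 le_in] := i_in.
have /andP[_ le_Xh] := xcrit_bounds lam beta i_in.
have [/andP[_ le_hn] _] := @carrel_hi_spec n lam i le_in.
have j_in : in_range n j by rewrite /in_range; lia.
split => //; last exact: xcrit_slope.
- by apply: (@partition_carrel_const n lam i j) => //; lia.
- exact: beta_up.
- by have := beta_plat j j_in; rewrite /platform (@xcrit_const n lam beta i i_in j range_j).
Qed.

Theorem lemma7p1 (n : nat) (lam beta pi : nat -> nat)
    (L : nat -> seq (nat * nat)) :
  1 <= n ->
  is_partition n lam ->
  UBP n lam beta ->
  is_perm n pi ->
  LD n lam beta pi L ->
  forall m, in_range n m ->
    exists2 k, k < size (L m) &
      nth (0,0) (L m) k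
        = (lam (pi m) + n - pi m, core n lam beta (pi m)) /\
      (forall j, k <= j -> j.+1 < size (L m) ->
         nth (0,0) (L m) j.+1
           = ((nth (0,0) (L m) j).1, (nth (0,0) (L m) j).2.+1)).
Proof.
move=> _ lam_part beta_UBP pi_perm [L_spec L_disj] m m_in.
set i := pi m; have i_in : in_range n i := pi_perm.1 m m_in.
have block := xcrit_block lam_part beta_UBP i_in.
have /andP[le_iX le_Xh] := xcrit_bounds lam beta i_in.
have /andP[i_gt0 le_in] := i_in.
have [/andP[_ le_hn] _] := @carrel_hi_spec n lam i le_in.
set X := xcrit n lam beta i in block le_iX le_Xh *.
have [_ _ le_XbX _ _] := block X (introT andP (conj le_iX (leqnn X))).
pose D m' := in_range n m' /\ i <= pi m' <= X.
rewrite (_ : core n lam beta i = beta X + i - X); last by rewrite /core -/X; lia.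
apply: (@disjoint_paths_vertical_tail _ D pi (beta \o pi) L (lam i + n) (beta X) X).
- lia.
- by move=> a [_ /andP[]].
- by move=> a [_ /block[]].
- by move=> a [_ /block[]].
- move=> a j [_ range_a] range_j.
  have j_in : in_range n j by rewrite /in_range; lia.
  have [m' m'_in pi_m'] := is_perm_onto pi_perm j_in.
  by exists m' => //; split; rewrite // pi_m'; lia.
- by move=> a [a_in _]; case: (L_spec a a_in).
- move=> a [a_in _]; have [_ [-> _]] := L_spec a a_in.
  by rewrite /level /=; move: a_in; rewrite /in_range; lia.
- move=> a [a_in range_a]; have [_ [_ ->]] := L_spec a a_in.
  by have [_ <- _ _ _] := block _ range_a.
- by move=> a b p [a_in _] [b_in _]; apply: L_disj.
- by split; rewrite // /i; lia.
Qed.
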